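(* Let $R$ be an arithmetic ring with Jacobson radical $J(R)$. Then the following are equivalent: (1) $R$ has a unique minimal prime ideal; (2) for every $d\in R\setminus J(R)$, the annihilator $(0:d)$ is contained in $J(R)$.
   Context: All rings are commutative with identity. $R$ is arithmetic if $R_M$ is a valuation ring (ideals totally ordered by inclusion) for every maximal ideal $M$. *)

From mathcomp Require Import all_boot all_algebra.
Set Implicit Arguments. Unset Strict Implicit. Unset Printing Implicit Defensive.
Import GRing.Theory.
Local Open Scope ring_scope.

Section Ideals.
Variable R : comNzRingType.

Definition is_ideal (I : R -> Prop) : Prop :=
  [/\ I 0, (forall x y, I x -> I y -> I (x + y)) & (forall r x, I x -> I (r * x))].

Definition subideal (I K : R -> Prop) : Prop := forall x, I x -> K x.
Definition same_ideal (I K : R -> Prop) : Prop := forall x, I x <-> K x.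

Definition is_prime_ideal (P : R -> Prop) : Prop :=
  [/\ is_ideal P, ~ P 1 & (forall a b, P (a * b) -> P a \/ P b)].

Definition is_maximal_ideal (M : R -> Prop) : Prop :=
  [/\ is_ideal M, ~ M 1 &
      (forall I, is_ideal I -> subideal M I -> I 1 \/ subideal I M)].

Definition is_minimal_prime (P : R -> Prop) : Prop :=
  is_prime_ideal P /\ (forall Q, is_prime_ideal Q -> subideal Q P -> subideal P Q).

Definition jacobson (x : R) : Prop := forall M, is_maximal_ideal M -> M x.

Definition ann (d : R) (x : R) : Prop := x * d = 0.

(* Localization R_M at a maximal ideal M, built from fractions a/s = (a, s)
   with s outside M, modulo  (a,s) ~ (b,t)  iff  u (a t - b s) = 0 for some u not in M. *)
Definition loc_valid (M : R -> Prop) (p : R * R) : Prop := ~ M p.2.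

Definition loc_equiv (M : R -> Prop) (p q : R * R) : Prop :=
  exists u, ~ M u /\ u * (p.1 * q.2 - q.1 * p.2) = 0.

Definition loc_add (p q : R * R) : R * R := (p.1 * q.2 + q.1 * p.2, p.2 * q.2).
Definition loc_mul (p q : R * R) : R * R := (p.1 * q.1, p.2 * q.2).

(* An ideal of R_M, as a predicate on fractions compatible with equality in R_M. *)
Definition is_loc_ideal (M : R -> Prop) (I : R * R -> Prop) : Prop :=
  [/\ I (0, 1),
      (forall p q, loc_valid M p -> loc_valid M q -> loc_equiv M p q -> I p -> I q),
      (forall p q, loc_valid M p -> loc_valid M q -> I p -> I q -> I (loc_add p q))
    & (forall r p, loc_valid M r -> loc_valid M p -> I p -> I (loc_mul r p))].

Definition loc_valuation (M : R -> Prop) : Prop :=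
  forall I K, is_loc_ideal M I -> is_loc_ideal M K ->
    (forall p, loc_valid M p -> I p -> K p) \/
    (forall p, loc_valid M p -> K p -> I p).

Definition arithmetic : Prop :=
  forall M, is_maximal_ideal M -> loc_valuation M.

End Ideals.

From mathcomp Require Import all_boot all_algebra.
From mathcomp Require Import boolp classical_sets.
From mathcomp Require Import ring.
Set Implicit Arguments. Unset Strict Implicit. Unset Printing Implicit Defensive.
Import GRing.Theory.
Local Open Scope classical_set_scope.
Local Open Scope ring_scope.

(* In an arithmetic ring the primes inside a maximal ideal M form a chain,
   since they extend to ideals of the valuation ring R_M.  Hence the
   intersection Q_M of these primes is a prime, the only minimal prime
   contained in M, and the minimal primes of R are exactly the Q_M.
   (1) => (2): the unique minimal prime lies in every M, hence in J(R), and it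
   contains x whenever x d = 0 and d is outside it.
   (2) => (1): an element a of Q_M is killed in R_M by a power: u a^n = 0 with
   u outside M.  If a were outside another maximal ideal M', then a^n would be
   outside J(R), so u would lie in J(R), hence in M.  Thus Q_M lies in M',
   and Q_M = Q_M' by minimality. *)

Section PrimeIdeals.
Variable R : comNzRingType.
Implicit Types (I A B M P Q S : R -> Prop) (a b c x y : R).

Definition avoids I S := forall x, I x -> ~ S x.

Definition maximal_avoiding S A :=
  [/\ is_ideal A, avoids A S &
      forall B, is_ideal B -> subideal A B -> avoids B S -> subideal B A].

Lemma zero_ideal : is_ideal (fun x : R => x = 0).
Proof.
by split=> [|x y -> ->|r x ->]; rewrite ?addr0 ?mulr0.
Qed.

Lemma bigcup_chain_ideal (F : set (set R)) :
  (forall K, F K -> K !=set0 -> is_ideal K) -> total_on F subset ->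
  \bigcup_(K in F) K !=set0 -> is_ideal (\bigcup_(K in F) K).
Proof.
move=> Fideal Ftot [x0 [K0 FK0 K0x0]].
have idealF K x : F K -> K x -> is_ideal K by move=> FK Kx; apply: Fideal FK _; exists x.
have [K0_0 _ _] := idealF _ _ FK0 K0x0.
split; first by exists K0.
- move=> x y [K1 FK1 K1x] [K2 FK2 K2y].
  have [_ K1D _] := idealF _ _ FK1 K1x; have [_ K2D _] := idealF _ _ FK2 K2y.
  have [K12|K21] := Ftot K1 K2 FK1 FK2.
  + by exists K2 => //; apply: K2D => //; apply: K12.
  + by exists K1 => //; apply: K1D => //; apply: K21.
- move=> r x [K FK Kx]; have [_ _ KM] := idealF _ _ FK Kx.
  by exists K => //; apply: KM.
Qed.

Lemma exists_maximal_avoiding I S : is_ideal I -> avoids I S ->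
  exists A, subideal I A /\ maximal_avoiding S A.
Proof.
move=> hI IS.
pose good K := [/\ is_ideal K, subideal I K & avoids K S].
(* The empty chain must be admissible too, hence the extra member set0. *)
have [|A [PA Amax]] := @Zorn_bigcup R (fun K => K = set0 \/ good K).
  move=> F FP Ftot.
  have goodF K : F K -> K !=set0 -> good K.
    by move=> /FP [->|//] [x []].
  have [/eqP U0|/set0P [x Ux]] := boolP (\bigcup_(K in F) K == set0); first by left.
  have [K0 FK0 K0x] := Ux; have [_ IK0 _] := goodF K0 FK0 (ex_intro _ x K0x).
  right; split.
  - apply: bigcup_chain_ideal => //; last by exists x.
    by move=> K FK /(goodF K FK) [].
  - by move=> y Iy; exists K0 => //; apply: IK0.
  - by move=> y [K FK Ky]; have [_ _ KS] := goodF K FK (ex_intro _ y Ky); apply: KS.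
have [hA IA AS] : good A.
  case: PA => // A0; exfalso; apply: (Amax I); last by right; split.
  have [I0 _ _] := hI.
  by rewrite A0; split=> [x //|/(_ 0 I0)].
exists A; split=> //; split=> // B hB AB BS x Bx.
apply: contrapT => nAx; apply: (Amax B); last by right; split=> // y /IA /AB.
by split=> // /(_ x Bx).
Qed.

Definition ideal_adjoin A c x := exists p r, A p /\ x = p + r * c.

Lemma ideal_adjoin_ideal A c : is_ideal A -> is_ideal (ideal_adjoin A c).
Proof.
case=> A0 AD AM; split.
- by exists 0, 0; rewrite mul0r addr0.
- move=> _ _ [p [r [Ap ->]]] [q [s [Aq ->]]].
  by exists (p + q), (r + s); split; [apply: AD | ring].
- move=> t _ [p [r [Ap ->]]].
  by exists (t * p), (t * r); split; [apply: AM | ring].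
Qed.

Lemma maximal_avoiding_adjoin S A c : maximal_avoiding S A -> ~ A c ->
  exists x, S x /\ ideal_adjoin A c x.
Proof.
move=> [hA _ Amax] nAc; apply: contrapT => hno; apply: nAc.
suff adjA : subideal (ideal_adjoin A c) A.
  by apply: adjA; exists 0, 1; split; [case: hA | rewrite add0r mul1r].
apply: Amax; first exact: ideal_adjoin_ideal.
- by move=> x Ax; exists x, 0; rewrite mul0r addr0.
- by move=> x Ax Sx; apply: hno; exists x.
Qed.

Lemma maximal_avoiding_prime S A : S 1 -> (forall x y, S x -> S y -> S (x * y)) ->
  maximal_avoiding S A -> is_prime_ideal A.
Proof.
move=> S1 SM Amax; have [[A0 AD AM] AS _] := Amax.
split=> [//|/(AS 1)//|a b Aab].
apply: contrapT => /not_orP [nAa nAb].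
have [s [Ss [p [r [Ap es]]]]] := maximal_avoiding_adjoin Amax nAa.
have [t [St [q [u [Aq et]]]]] := maximal_avoiding_adjoin Amax nAb.
apply: (AS _ _ (SM _ _ Ss St)); rewrite es et.
have -> : (p + r * a) * (q + u * b) = (q + u * b) * p + (r * a * q + r * u * (a * b)).
  by ring.
by apply: (AD); [apply: AM | apply: (AD); apply: AM].
Qed.

Lemma maximal_idealE M : is_maximal_ideal M <-> maximal_avoiding (eq 1) M.
Proof.
split.
- case=> hM M1 Mmax; split=> // [x Mx x1|B hB MB B1]; first by apply: M1; rewrite x1.
  by case: (Mmax B hB MB) => // /(B1 1).
- case=> hM M1 Mmax; split=> [//|/(M1 1)//|B hB MB].
  have [B1|nB1] := pselect (B 1); [by left | right].
  by apply: Mmax => // x Bx x1; apply: nB1; rewrite x1.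
Qed.

Lemma maximal_ideal_prime M : is_maximal_ideal M -> is_prime_ideal M.
Proof.
move/maximal_idealE; apply: maximal_avoiding_prime => // x y <- <-.
by rewrite mulr1.
Qed.

Lemma exists_maximal_ideal I : is_ideal I -> ~ I 1 ->
  exists M, is_maximal_ideal M /\ subideal I M.
Proof.
move=> hI nI1; have [|M [IM Mmax]] := @exists_maximal_avoiding I (eq 1) hI.
  by move=> x Ix x1; apply: nI1; rewrite x1.
by exists M; split=> //; apply/maximal_idealE.
Qed.

Lemma exists_prime_avoiding S : S 1 -> (forall x y, S x -> S y -> S (x * y)) ->
  ~ S 0 -> exists P, is_prime_ideal P /\ avoids P S.
Proof.
move=> S1 SM S0; have [|A [_ Amax]] := exists_maximal_avoiding (S := S) zero_ideal.
  by move=> x ->.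
by exists A; split; [exact: maximal_avoiding_prime Amax | case: Amax].
Qed.

Lemma prime_notin_expr P a n : is_prime_ideal P -> ~ P a -> ~ P (a ^+ n).
Proof.
case=> _ P1 Pmul nPa; elim: n => [|n IHn]; first by rewrite expr0.
by rewrite exprS => /Pmul [].
Qed.

End PrimeIdeals.

Section PrimesInsideMaximal.
Variable R : comNzRingType.
Implicit Types (M P Q : R -> Prop) (a x : R).

Lemma prime_loc_ideal M P : is_prime_ideal P -> subideal P M ->
  is_loc_ideal M (fun p => P p.1).
Proof.
case=> [[P0 PD PM] _ Pmul] sPM; split=> //=.
- move=> [a s] [b t] /= nMs nMt [u [nMu /= e]] Pa.
  have : P (u * (b * s)).
    have -> : u * (b * s) = u * (a * t).
      by apply/eqP; rewrite eq_sym -subr_eq0 -mulrBr e.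
    by apply: (PM); rewrite mulrC; apply: PM.
  by case/Pmul=> [/sPM//|]; case/Pmul=> // /sPM Ms; case: nMs.
- by move=> [a s] [b t] /= _ _ Pa Pb; apply: PD; rewrite mulrC; apply: PM.
- by move=> [r s] [a t] /= _ _ Pa; apply: PM.
Qed.

Lemma loc_valuation_primes_chain M P Q : ~ M 1 -> loc_valuation M ->
  is_prime_ideal P -> is_prime_ideal Q -> subideal P M -> subideal Q M ->
  subideal P Q \/ subideal Q P.
Proof.
move=> nM1 hv hP hQ sPM sQM.
by case: (hv _ _ (prime_loc_ideal hP sPM) (prime_loc_ideal hQ sQM)) => sub;
  [left | right] => x Px; apply: (sub (x, 1)).
Qed.

Definition cap_primes_in M x := forall P, is_prime_ideal P -> subideal P M -> P x.

Lemma cap_primes_in_sub M : is_prime_ideal M -> subideal (cap_primes_in M) M.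
Proof. by move=> hM x; apply. Qed.

Lemma cap_primes_in_prime M : is_prime_ideal M -> loc_valuation M ->
  is_prime_ideal (cap_primes_in M).
Proof.
move=> hM hv; have [_ nM1 _] := hM; split; [split | |].
- by move=> P [[]].
- move=> x y Qx Qy P hP sPM; case: (hP) => [[_ PD _] _ _].
  by apply: PD; [apply: Qx | apply: Qy].
- by move=> r x Qx P hP sPM; case: (hP) => [[_ _ PM] _ _]; apply: PM; apply: Qx.
- by move/(cap_primes_in_sub hM).
- move=> a b Qab; apply: contrapT => /not_orP [nQa nQb].
  have [P /not_implyP [hP /not_implyP [sPM nPa]]] := (existsNP _).2 nQa.
  have [P' /not_implyP [hP' /not_implyP [sP'M nP'b]]] := (existsNP _).2 nQb.
  have [[_ _ Pmul] [_ _ P'mul]] := (hP, hP').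
  case: (loc_valuation_primes_chain nM1 hv hP hP' sPM sP'M) => sub.
  + by case: (Pmul a b (Qab P hP sPM)) => // /sub.
  + by case: (P'mul a b (Qab P' hP' sP'M)) => // /sub.
Qed.

Lemma cap_primes_in_minimal M : is_prime_ideal M -> loc_valuation M ->
  is_minimal_prime (cap_primes_in M).
Proof.
move=> hM hv; split; first exact: cap_primes_in_prime.
move=> Q hQ sQ x Qx; apply: Qx => // y /sQ; exact: cap_primes_in_sub.
Qed.

Lemma minimal_prime_subE M P : is_prime_ideal M -> loc_valuation M ->
  is_minimal_prime P -> subideal P M -> same_ideal P (cap_primes_in M).
Proof.
move=> hM hv [hP Pmin] sPM.
have sQP : subideal (cap_primes_in M) P by move=> x; apply.
by move=> x; split; [apply: (Pmin _ (cap_primes_in_prime hM hv)) | apply: sQP].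
Qed.

Lemma cap_primes_in_nil M a : is_prime_ideal M -> cap_primes_in M a ->
  exists u n, ~ M u /\ u * a ^+ n = 0.
Proof.
move=> hM Qa; apply: contrapT => hno; have [_ _ Mmul] := hM.
pose S x := exists u n, ~ M u /\ x = u * a ^+ n.
have [|||P [hP PS]] := @exists_prime_avoiding R S.
- by exists 1, 0%N; split; [case: hM | rewrite mul1r expr0].
- move=> _ _ [u [n [nMu ->]]] [v [m [nMv ->]]].
  exists (u * v), (n + m)%N; split; first by case/Mmul.
  by rewrite exprD; ring.
- by move=> [u [n [nMu e]]]; apply: hno; exists u, n.
have sPM : subideal P M.
  by move=> x Px; apply: contrapT => nMx; apply: (PS x Px); exists x, 0%N; rewrite expr0 mulr1.
by apply: (PS a (Qa P hP sPM)); exists 1, 1%N; split; [case: hM | rewrite expr1 mul1r].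
Qed.

End PrimesInsideMaximal.

Section Arithmetic.
Variable R : comNzRingType.
Hypothesis hR : arithmetic R.
Implicit Types (M P Q : R -> Prop) (d x : R).

Lemma minimal_prime_cap_primes_in Q : is_minimal_prime Q ->
  exists M, is_maximal_ideal M /\ same_ideal Q (cap_primes_in M).
Proof.
move=> hQ; have [[hQi nQ1 _] _] := hQ.
have [M [hM sQM]] := exists_maximal_ideal hQi nQ1.
by exists M; split; last exact: minimal_prime_subE (maximal_ideal_prime hM) (hR hM) hQ sQM.
Qed.

Lemma unique_minimal_prime_jacobson P :
  (forall Q, is_minimal_prime Q -> same_ideal Q P) -> subideal P (@jacobson R).
Proof.
move=> Puniq x Px M hM; have hMp := maximal_ideal_prime hM.
apply: (cap_primes_in_sub hMp).
exact: (Puniq _ (cap_primes_in_minimal hMp (hR hM)) x).2.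
Qed.

Lemma cap_primes_in_sub_maximal M M' :
  (forall d, ~ jacobson d -> forall x, ann d x -> jacobson x) ->
  is_maximal_ideal M -> is_maximal_ideal M' -> subideal (cap_primes_in M) M'.
Proof.
move=> annJ hM hM' a Qa; apply: contrapT => nM'a.
have [u [n [nMu ua]]] := cap_primes_in_nil (maximal_ideal_prime hM) Qa.
have nM'an := prime_notin_expr (n := n) (maximal_ideal_prime hM') nM'a.
by apply: nMu; apply: (annJ (a ^+ n)) => // /(_ M' hM').
Qed.

Lemma unique_minimal_prime_ann_jacobson P d x :
  is_minimal_prime P -> (forall Q, is_minimal_prime Q -> same_ideal Q P) ->
  ~ jacobson d -> ann d x -> jacobson x.
Proof.
move=> [[[P0 _ _] _ Pmul] _] Puniq nJd xd.
have PJ := unique_minimal_prime_jacobson Puniq.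
by move: P0; rewrite -xd => /Pmul [/PJ // | /PJ].
Qed.

Lemma ann_jacobson_unique_minimal_prime :
  (forall d, ~ jacobson d -> forall x, ann d x -> jacobson x) ->
  exists P, is_minimal_prime P /\ forall Q, is_minimal_prime Q -> same_ideal Q P.
Proof.
move=> annJ.
have [|M [hM _]] := exists_maximal_ideal (@zero_ideal R).
  by move/eqP; rewrite oner_eq0.
have hMp := maximal_ideal_prime hM.
have QMmin := cap_primes_in_minimal hMp (hR hM).
exists (cap_primes_in M); split=> // Q /minimal_prime_cap_primes_in [M' [hM' eQ]] x.
have eM := minimal_prime_subE (maximal_ideal_prime hM') (hR hM') QMmin
  (cap_primes_in_sub_maximal annJ hM hM').
by rewrite eQ eM.
Qed.

End Arithmetic.

Theorem proposition3p7 (R : comNzRingType) (hR : arithmetic R) :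
  (exists P : R -> Prop, is_minimal_prime P /\
     forall Q : R -> Prop, is_minimal_prime Q -> same_ideal Q P)
  <->
  (forall d : R, ~ jacobson d -> forall x : R, ann d x -> jacobson x).
Proof.
split; last exact: ann_jacobson_unique_minimal_prime.
move=> [P [Pmin Puniq]] d nJd x xd.
exact: (unique_minimal_prime_ann_jacobson hR Pmin Puniq nJd xd).
Qed.
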